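(* Let $S \subseteq \mathbb{R}^n$ be nonempty, closed and convex, and let $F_i = f_i + g_i$, $i=1,\dots,m$, where each $f_i \colon S \to \mathbb{R}$ is continuously differentiable and each $g_i \colon S \to \mathbb{R}$ is convex. For $\ell>0$ define \[ w_\ell(x) := \max_{y \in S} \min_{i = 1,\dots,m} \left\{ \nabla f_i(x)^\top (x - y) + g_i(x) - g_i(y) - \frac{\ell}{2}\|x - y\|^2 \right\}, \quad x\in S. \] Let $\ell > 0$ and let $r$ be any scalar with $r \ge \ell$. Then \[ w_r(x) \le w_\ell(x) \le \frac{r}{\ell} w_r(x) \quad \text{for all } x \in S. \] *)

From HB Require Import structures.
From mathcomp Require Import all_boot all_order all_algebra.
From mathcomp Require Import all_classical all_reals all_analysis.
Set Implicit Arguments. Unset Strict Implicit. Unset Printing Implicit Defensive.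
Import Order.TTheory GRing.Theory Num.Theory.
Import numFieldNormedType.Exports.
Local Open Scope classical_set_scope.
Local Open Scope ring_scope.

(* Squared Euclidean norm of a vector of R^n (the canonical norm of 'rV_n in
   MathComp-Analysis is the sup norm, so we write the Euclidean one explicitly). *)
Definition sqnorm2 {R : realType} {n : nat} (v : 'rV[R]_n) : R :=
  \sum_(j < n) (v ord0 j) ^+ 2.

Definition convex_subset {R : realType} {n : nat} (S : set 'rV[R]_n) : Prop :=
  forall x y t, S x -> S y -> 0 <= t -> t <= 1 -> S (t *: x + (1 - t) *: y).

Definition convex_fun_on {R : realType} {n : nat} (S : set 'rV[R]_n)
  (g : 'rV[R]_n -> R) : Prop :=
  forall x y t, S x -> S y -> 0 <= t -> t <= 1 ->
    g (t *: x + (1 - t) *: y) <= t * g x + (1 - t) * g y.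

(* f is continuously differentiable on S: it is differentiable on an open
   neighbourhood U of S and its derivative x |-> 'd f x is continuous on U
   (continuity of every directional derivative, equivalently of all partials). *)
Definition C1_on {R : realType} {n : nat} (S : set 'rV[R]_n)
  (f : 'rV[R]_n -> R) : Prop :=
  exists U : set 'rV[R]_n, [/\ open U, S `<=` U,
    (forall x, U x -> differentiable f x) &
    (forall v : 'rV[R]_n, {within U, continuous (fun x => 'd f x v)})].

Definition wobj {R : realType} {n m : nat} (f g : 'I_m -> 'rV[R]_n -> R)
  (l : R) (x y : 'rV[R]_n) : \bar R :=
  \big[Order.min/+oo%E]_(i < m)
     ('d (f i) x (x - y) + g i x - g i y - l / 2 * sqnorm2 (x - y))%:E.

Definition w {R : realType} {n m : nat} (S : set 'rV[R]_n)
  (f g : 'I_m -> 'rV[R]_n -> R) (l : R) (x : 'rV[R]_n) : \bar R :=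
  ereal_sup [set wobj f g l x y | y in S].

From HB Require Import structures.
From mathcomp Require Import all_boot all_order all_algebra.
From mathcomp Require Import all_classical all_reals all_analysis.
From mathcomp Require Import ring lra.
Set Implicit Arguments. Unset Strict Implicit. Unset Printing Implicit Defensive.
Import Order.TTheory GRing.Theory Num.Theory.
Import numFieldNormedType.Exports.
Local Open Scope classical_set_scope.
Local Open Scope ring_scope.

(* The first inequality holds because the quadratic penalty only grows with
   the parameter.  For the second, move a competitor y for w_l towards x:
   z = (l/r) y + (1 - l/r) x lies in S, and since the derivative is linear
   and the g_i are convex, every term of the r-objective at z is at least
   l/r times the corresponding term of the l-objective at y. *)

Lemma sqnorm2_ge0 (R : realType) (n : nat) (v : 'rV[R]_n) : 0 <= sqnorm2 v.
Proof. by apply: sumr_ge0 => j _; apply: sqr_ge0. Qed.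

Lemma sqnorm2Z (R : realType) (n : nat) (t : R) (v : 'rV[R]_n) :
  sqnorm2 (t *: v) = t ^+ 2 * sqnorm2 v.
Proof.
rewrite /sqnorm2 mulr_sumr; apply: eq_bigr => j _.
by rewrite mxE exprMn.
Qed.

Section StationarityMeasure.
Variables (R : realType) (n m : nat) (S : set 'rV[R]_n).
Variables (f g : 'I_m -> 'rV[R]_n -> R).

Lemma wobj_le_antimono (l r : R) (x y : 'rV[R]_n) :
  l <= r -> (wobj f g r x y <= wobj f g l x y)%E.
Proof.
move=> lr; rewrite /wobj; apply: le_bigmin; first by rewrite leey.
move=> i _; apply: le_trans (bigmin_le _ i _) _.
rewrite lee_fin lerB // ler_wpM2r ?sqnorm2_ge0 //; lra.
Qed.

Lemma w_le_antimono (l r : R) (x : 'rV[R]_n) :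
  l <= r -> (w S f g r x <= w S f g l x)%E.
Proof.
move=> lr; apply: ge_ereal_sup => _ [y Sy <-].
apply: le_trans (wobj_le_antimono x y lr) _.
by apply: ereal_sup_ubound; exists y.
Qed.

Hypothesis convex_g : forall i, convex_fun_on S (g i).

Lemma wobj_segment_lb (l r t : R) (x y : 'rV[R]_n) :
  S x -> S y -> 0 <= t -> t <= 1 -> r * t = l ->
  (t%:E * wobj f g l x y <= wobj f g r x (t *: y + (1 - t) *: x))%E.
Proof.
move=> Sx Sy t0 t1 rt; set z := t *: y + (1 - t) *: x.
have xz : x - z = t *: (x - y) by apply/rowP => j; rewrite !mxE; ring.
rewrite /wobj; apply: le_bigmin; first by rewrite leey.
move=> i _; apply: le_trans (lee_wpmul2l _ (bigmin_le _ i _)) _; first by [].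
have dZ : 'd (f i) x (t *: (x - y)) = t * 'd (f i) x (x - y) by rewrite linearZ.
rewrite -EFinM lee_fin xz sqnorm2Z dZ.
have gz : g i z <= t * g i y + (1 - t) * g i x by exact: convex_g.
have -> : r / 2 * (t ^+ 2 * sqnorm2 (x - y)) = t * (l / 2 * sqnorm2 (x - y)).
  by rewrite -rt; ring.
rewrite !mulrDr !mulrN; lra.
Qed.

Hypothesis convex_S : convex_subset S.

Lemma w_le_scaled (l r : R) (x : 'rV[R]_n) :
  S x -> 0 < l -> l <= r -> (w S f g l x <= (r / l)%:E * w S f g r x)%E.
Proof.
move=> Sx l0 lr; have r0 : 0 < r by apply: lt_le_trans lr.
have rl0 : (0 <= (r / l)%:E)%E by rewrite lee_fin ltW ?divr_gt0.
apply: ge_ereal_sup => _ [y Sy <-].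
set t := l / r.
have t0 : 0 <= t by rewrite ltW ?divr_gt0.
have t1 : t <= 1 by rewrite ler_pdivrMr // mul1r.
have rt : r * t = l by rewrite /t mulrCA divff ?mulr1 ?gt_eqF.
have -> : wobj f g l x y = ((r / l)%:E * (t%:E * wobj f g l x y))%E.
  by rewrite muleA -EFinM /t mulrA divfK ?gt_eqF // divff ?gt_eqF // mul1e.
apply: lee_wpmul2l => //; apply: le_trans (wobj_segment_lb Sx Sy t0 t1 rt) _.
apply: ereal_sup_ubound; exists (t *: y + (1 - t) *: x); last by [].
exact: convex_S Sy Sx t0 t1.
Qed.

End StationarityMeasure.

Theorem theorem4p2 (R : realType) (n m : nat) (S : set 'rV[R]_n)
  (f g : 'I_m -> 'rV[R]_n -> R) (l r : R) :
  (0 < m)%N ->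
  S !=set0 -> closed S -> convex_subset S ->
  (forall i, C1_on S (f i)) ->
  (forall i, convex_fun_on S (g i)) ->
  0 < l -> l <= r ->
  forall x, S x ->
    (w S f g r x <= w S f g l x)%E /\
    (w S f g l x <= (r / l)%:E * w S f g r x)%E.
Proof.
move=> _ _ _ convex_S _ convex_g l0 lr x Sx; split.
- exact: w_le_antimono.
- exact: w_le_scaled.
Qed.
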